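(* Let $(X_n)_{n\ge1}$ be a sequence of symmetrical random variables with finite second moments, taking values in a Hilbert space $\mathbb{H}$. Suppose the series $\sum_{n=1}^\infty X_n$ converges almost surely in $\mathbb{H}$, and there is a constant $K>0$ such that for all integers $m\ge0$ and $j\ge1$, $$\mathbb{E}\big(\|X_{m+1}+\cdots+X_{m+j}\|^4\big)\le K\,\Big(\mathbb{E}\big(\|X_{m+1}+\cdots+X_{m+j}\|^2\big)\Big)^2.$$ Then the series $\sum_{n=1}^\infty X_n$ also converges in $L^2(\Omega;\mathbb{H})$, i.e. $\lim_{m\to\infty}\sup_{j\ge1}\mathbb{E}(\|S_{m+j}-S_m\|^2)=0$ where $S_n=X_1+\cdots+X_n$.
   Context: A random variable $X$ with values in $\mathbb{H}$ is symmetrical if $X$ and $-X$ have the same distribution. No independence among the $X_n$ is assumed. *)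

From HB Require Import structures.
From mathcomp Require Import all_boot all_order all_algebra.
From mathcomp Require Import all_classical all_reals all_analysis.
Set Implicit Arguments. Unset Strict Implicit. Unset Printing Implicit Defensive.
Import Order.TTheory GRing.Theory Num.Theory.
Import numFieldNormedType.Exports.
Local Open Scope classical_set_scope.
Local Open Scope ring_scope.

(* A (real) inner product [ip] on V inducing the norm of V:
   symmetric, linear in the first argument, and |x|^2 = <x,x>.
   (Positivity/definiteness then follow from the norm axioms.)
   A Hilbert space is a complete normed space with such an inner product. *)
Definition is_inner_product_norm {R : realType} {V : normedModType R}
  (ip : V -> V -> R) : Prop :=
  [/\ (forall x y, ip x y = ip y x),
      (forall (a : R) (x y z : V), ip (a *: x + y) z = a * ip x z + ip y z)
    & (forall x, `|x| ^+ 2 = ip x x)].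

Definition Borel_set {V : topologicalType} (B : set V) : Prop :=
  <<s [set O : set V | open O] >> B.

(* An H-valued random variable (in the sense needed for L^p(Omega;H)):
   Borel measurable and separably valued (strongly measurable, by Pettis). *)
Definition H_random_variable {d} {T : measurableType d} {R : realType}
  {V : normedModType R} (X : T -> V) : Prop :=
  (forall B : set V, Borel_set B -> measurable (X @^-1` B)) /\
  (exists D : set V, countable D /\ range X `<=` closure D).

Definition symmetrical {d} {T : measurableType d} {R : realType}
  {V : normedModType R} (P : probability T R) (X : T -> V) : Prop :=
  forall B : set V, Borel_set B ->
    P (X @^-1` B) = P ((fun w => - X w) @^-1` B).

Definition finite_second_moment {d} {T : measurableType d} {R : realType}
  {V : normedModType R} (P : probability T R) (X : T -> V) : Prop :=
  (\int[P]_w ((`|X w| ^+ 2)%:E) < +oo)%E.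

(* Partial sums: S n = X_1 + ... + X_n, with X_k represented by X (k-1). *)
Definition psum {T} {R : realType} {V : normedModType R}
  (X : nat -> T -> V) (n : nat) (w : T) : V := \sum_(i < n) X i w.

From HB Require Import structures.
From mathcomp Require Import all_boot all_order all_algebra.
From mathcomp Require Import all_classical all_reals all_analysis.
From mathcomp Require Import ring lra.
From mathcomp Require Import measurable_realfun.
Set Implicit Arguments. Unset Strict Implicit. Unset Printing Implicit Defensive.
Import Order.TTheory GRing.Theory Num.Theory.
Import numFieldNormedType.Exports.
Local Open Scope classical_set_scope.
Local Open Scope ring_scope.

(* Write Y = S_(m+j) - S_m for an increment of the partial sums.  The hypothesis
   E|Y|^4 <= K (E|Y|^2)^2 makes |Y|^2 unable to be small most of the time while having a
   large mean: by the Paley-Zygmund argument, |Y|^2 exceeds half its mean with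
   probability at least 1/(16K).  Almost sure convergence of (S_n), on the other hand,
   makes P(|S_(m+j) - S_m|^2 > c) small uniformly in j once m is large, for each c > 0.
   Together, E|S_(m+j) - S_m|^2 <= e for all j as soon as m is large. *)

Definition increment (T : Type) (R : realType) (H : normedModType R)
  (X : nat -> T -> H) (m j : nat) (w : T) : H := psum X (m + j) w - psum X m w.

Lemma incrementE (T : Type) (R : realType) (H : normedModType R)
  (X : nat -> T -> H) (m j : nat) (w : T) :
  increment X m j w = \sum_(i < j) X (m + i)%N w.
Proof. by rewrite /increment /psum big_split_ord /= addrAC subrr add0r. Qed.

Section Measurability.
Context (d : measure_display) (T : measurableType d) (R : realType)
  (H : normedModType R).

(* [F] is measurable "through distances": every map w |-> |F w - y| is measurable.
   This is the form of measurability of H-valued maps that survives finite sums. *)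
Definition dist_measurable (F : T -> H) : Prop :=
  forall y : H, measurable_fun setT (fun w => `|F w - y|).

Lemma H_random_variable_dist_measurable (X : T -> H) :
  H_random_variable X -> dist_measurable X.
Proof.
move=> [XB _] y; apply: (measurability _ (RGenInftyO.measurableE R)).
move=> _ [_ [x ->] <-]; rewrite setTI.
have -> : (fun w => `|X w - y|) @^-1` `]-oo, x[ = X @^-1` [set v | `|v - y| < x].
  by apply/seteqP; split => w /=; rewrite in_itv.
apply: XB; apply: sub_sigma_algebra => /=.
apply: (@open_comp _ _ (fun v => `|v - y|) [set r : R | r < x]); last exact: open_lt.
move=> v _; apply: (continuous_comp (f := fun v => v - y)); last exact: norm_continuous.
by apply: cvgB; [exact: cvg_id | exact: cvg_cst].
Qed.

Lemma H_random_variable_enum (X : T -> H) :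
  H_random_variable X -> exists e : nat -> H, range X `<=` closure (range e).
Proof.
move=> [_ [D [/pcard_surjP [e De] XD]]]; exists e.
apply: (subset_trans XD); apply: closureS => x /De [n _ <-]; by exists n.
Qed.

Let sum_recenter (F G y e : H) : F + G - y = (F - (y - e)) + (G - e).
Proof. by rewrite opprB addrACA [e - y + _]addrAC subrr add0r. Qed.

(* Distance measurability is stable under sums when the second summand is separably
   valued: |F + G - y| < x iff |F - (y - e p)| + |G - e p| < x for some point e p of a
   dense sequence, which exhibits the sublevel sets as countable unions. *)
Lemma dist_measurableD (F G : T -> H) (e : nat -> H) :
  dist_measurable F -> dist_measurable G -> range G `<=` closure (range e) ->
  dist_measurable (F \+ G).
Proof.
move=> mF mG Ge y; apply: (measurability _ (RGenInftyO.measurableE R)).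
move=> _ [_ [x ->] <-]; rewrite setTI.
have -> : (fun w => `|F w + G w - y|) @^-1` `]-oo, x[ =
    \bigcup_p [set w | `|F w - (y - e p)| + `|G w - e p| < x].
  apply/seteqP; split => w /=; rewrite in_itv /=; last first.
    by move=> [p _ /=]; rewrite (sum_recenter _ _ _ (e p)); apply: le_lt_trans (ler_normD _ _).
  move=> Fx; pose r := (x - `|F w + G w - y|) / 2.
  have r0 : 0 < r by rewrite divr_gt0 // subr_gt0.
  have [_ [[p _ <-] /=]] := Ge (G w) (ex_intro2 _ _ w I erefl) _ (nbhsx_ballx (G w) r r0).
  rewrite -ball_normE /= => Gp; exists p => //=.
  have -> : F w - (y - e p) = (F w + G w - y) - (G w - e p).
    by rewrite (sum_recenter (F w) (G w) y (e p)) addrK.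
  have := ler_normB (F w + G w - y) (G w - e p); rewrite /r in Gp; lra.
apply: bigcupT_measurable => p; rewrite -[X in measurable X]setTI.
have -> : [set w | `|F w - (y - e p)| + `|G w - e p| < x] =
    (fun w => `|F w - (y - e p)| + `|G w - e p|) @^-1` `]-oo, x[.
  by apply/seteqP; split => w /=; rewrite in_itv.
exact: (measurable_funD (mF _) (mG _)) measurableT _ (measurable_itv _).
Qed.

Variable X : nat -> T -> H.
Hypothesis X_rv : forall n, H_random_variable (X n).

Lemma block_dist_measurable (m k : nat) :
  dist_measurable (fun w => \sum_(i < k) X (m + i)%N w).
Proof.
elim: k => [|k IH].
  by move=> y; under eq_fun do rewrite big_ord0; exact: measurable_cst.
have [e Xe] := H_random_variable_enum (X_rv (m + k)).
have := dist_measurableD IH (H_random_variable_dist_measurable (X_rv (m + k))) Xe.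
by move=> mS y; under eq_fun do rewrite big_ord_recr /=; exact: mS.
Qed.

Lemma increment_norm_measurable (m j : nat) :
  measurable_fun setT (fun w => `|increment X m j w|).
Proof.
under eq_fun do rewrite incrementE -[X in `|X|]subr0; exact: block_dist_measurable.
Qed.

Lemma rv_norm_measurable (n : nat) : measurable_fun setT (fun w => `|X n w|).
Proof.
by under eq_fun do rewrite -[X in `|X|]subr0; exact: H_random_variable_dist_measurable.
Qed.

End Measurability.

Lemma sqr_sum_le (R : realFieldType) (k : nat) (u : 'I_k -> R) :
  (\sum_i u i) ^+ 2 <= k%:R * \sum_i u i ^+ 2.
Proof.
have -> : (\sum_i u i) ^+ 2 = \sum_i \sum_j u i * u j.
  by rewrite expr2 mulr_suml; apply: eq_bigr => i _; rewrite mulr_sumr.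
have amgm : 2 * \sum_i \sum_j u i * u j <= \sum_i \sum_j (u i ^+ 2 + u j ^+ 2).
  rewrite mulr_sumr; apply: ler_sum => i _; rewrite mulr_sumr; apply: ler_sum => j _.
  have := sqr_ge0 (u i - u j); rewrite sqrrB mulr2n -mulr_natl; lra.
have : \sum_i \sum_j (u i ^+ 2 + u j ^+ 2) = 2 * (k%:R * \sum_i u i ^+ 2).
  under eq_bigr do rewrite big_split /= sumr_const card_ord -mulr_natr.
  by rewrite big_split /= sumr_const card_ord -mulr_suml -mulr_natr; lra.
lra.
Qed.

Section SecondMoment.
Context (d : measure_display) (T : measurableType d) (R : realType)
  (P : probability T R) (H : normedModType R) (X : nat -> T -> H).
Hypothesis X_rv : forall n, H_random_variable (X n).
Hypothesis X_L2 : forall n, finite_second_moment P (X n).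

(* Finite blocks of square-integrable variables are square integrable, by
   |X_m + ... + X_(m+k-1)|^2 <= k (|X_m|^2 + ... + |X_(m+k-1)|^2). *)
Lemma increment_second_moment_finite (m j : nat) :
  (\int[P]_w ((`|increment X m j w| ^+ 2)%:E) < +oo)%E.
Proof.
under eq_integral do rewrite incrementE.
have mXsq n : measurable_fun setT (fun w => (j%:R * `|X n w| ^+ 2)%:E).
  by apply/measurable_EFinP/measurable_funM/measurable_funX/rv_norm_measurable.
apply: (@le_lt_trans _ _ (\int[P]_w (\sum_(i < j) (j%:R * `|X (m + i)%N w| ^+ 2)%:E))%E).
  apply: ge0_le_integral => //.
  - apply/measurable_EFinP/measurable_funX.
    by under eq_fun do rewrite -incrementE; exact: increment_norm_measurable.
  - exact: emeasurable_sum.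
  move=> w _; rewrite sumEFin lee_fin -mulr_sumr.
  apply: le_trans (sqr_sum_le (fun i : 'I_j => `|X (m + i)%N w|)).
  rewrite lerXn2r ?nnegrE ?sumr_ge0 //; exact: ler_norm_sum.
rewrite ge0_integral_sum //; apply: lte_sum_pinfty => i _.
under eq_integral do rewrite EFinM.
rewrite ge0_integralZl_EFin //; last exact/measurable_EFinP/measurable_funX/rv_norm_measurable.
by apply: lte_mul_pinfty => //; exact: X_L2.
Qed.

End SecondMoment.

(* Truncation at level M: for c, z >= 0, z <= c + M [c < z] + z^2 / M.  Integrated, this
   bounds a second moment by a tail probability and a fourth moment. *)
Lemma truncation_bound (R : realFieldType) (c M z : R) :
  0 <= c -> 0 < M -> 0 <= z -> z <= c + M * (c < z)%R%:R + M^-1 * z ^+ 2.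
Proof.
move=> c0 M0 z0; have zM : 0 <= M^-1 * z ^+ 2 by rewrite mulr_ge0 ?sqr_ge0 // invr_ge0 ltW.
have [cz|zc] := ltP c z; rewrite /= ?mulr0 ?mulr1 ?addr0; last by lra.
have [|Mz] := leP z M; first by lra.
have : z <= M^-1 * z ^+ 2 by rewrite ler_pdivlMl // expr2 ler_pM2r ?ltW ?(lt_trans M0).
lra.
Qed.

Section PaleyZygmund.
Context (d : measure_display) (T : measurableType d) (R : realType)
  (P : probability T R).

Lemma integral_cst_indic_add (c M N : R) (A : set T) (f : T -> R) :
  0 <= c -> 0 <= M -> 0 <= N -> measurable A -> measurable_fun setT f ->
  (forall w, 0 <= f w) ->
  (\int[P]_w (c + M * \1_A w + N * f w)%:E =
   c%:E + M%:E * P A + N%:E * \int[P]_w (f w)%:E)%E.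
Proof.
move=> c0 M0 N0 mA mf f0.
have mI : measurable_fun setT (fun w => M * \1_A w).
  exact/measurable_funM/measurable_indic.
have mcI : measurable_fun setT (fun w => c + M * \1_A w) by exact/measurable_funD.
have mNf : measurable_fun setT (fun w => N * f w) by exact/measurable_funM.
have I0 w : 0 <= \1_A w :> R by rewrite indicE.
under eq_integral do rewrite EFinD.
rewrite ge0_integralD //; try solve [exact/measurable_EFinP
  | by move=> w _; rewrite lee_fin ?addr_ge0 ?mulr_ge0].
under eq_integral do rewrite EFinD.
rewrite ge0_integralD //; try solve [exact/measurable_EFinP
  | by move=> w _; rewrite lee_fin ?mulr_ge0].
rewrite integral_cst //; set PT := (X in (c%:E * X)%E).
have -> : PT = 1%E by exact: probability_setT.
rewrite mule1.
under eq_integral do rewrite EFinM.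
rewrite ge0_integralZl_EFin ?integral_indic ?setIT //; last exact/measurable_EFinP/measurable_indic.
under eq_integral do rewrite EFinM.
by rewrite ge0_integralZl_EFin //; [move=> w _; rewrite lee_fin | exact/measurable_EFinP].
Qed.

Lemma paley_zygmund (K a : R) (Z : T -> R) :
  0 < K -> 0 < a -> measurable_fun setT Z ->
  (\int[P]_w (Z w ^+ 2)%:E = a%:E)%E ->
  (\int[P]_w (Z w ^+ 4)%:E <= K%:E * (a%:E * a%:E))%E ->
  ((16 * K)^-1%:E <= P [set w | (a / 2 < Z w ^+ 2)%R])%E.
Proof.
move=> K0 a0 mZ EZ2 EZ4.
set A := [set w | a / 2 < Z w ^+ 2]; set M := 4 * K * a.
have M0 : 0 < M by rewrite !mulr_gt0.
have mA : measurable A.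
  rewrite -[A]setTI; have := measurable_funX 2 mZ measurableT (measurable_itv `]a / 2, +oo[).
  by congr measurable; apply/seteqP; split => w /=; rewrite in_itv /= andbT.
have Z4 w : Z w ^+ 4 = (Z w ^+ 2) ^+ 2 by rewrite -exprM.
have bound : (a%:E <= (a / 2)%:E + M%:E * P A + M^-1%:E * \int[P]_w (Z w ^+ 4)%:E)%E.
  have a2 : 0 <= a / 2 by rewrite divr_ge0 ?ltW.
  have Mi : 0 <= M^-1 by rewrite invr_ge0 ltW.
  rewrite -EZ2 -integral_cst_indic_add ?(ltW M0) //; last 2 first.
  - exact: measurable_funX.
  - by move=> w; rewrite Z4 sqr_ge0.
  apply: ge0_le_integral => //.
  - by move=> w _; rewrite lee_fin sqr_ge0.
  - exact/measurable_EFinP/measurable_funX.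
  - apply/measurable_EFinP/measurable_funD; last exact/measurable_funM/measurable_funX.
    exact/measurable_funD/measurable_funM/measurable_indic.
  move=> w _; rewrite lee_fin Z4 indicE.
  have -> : (w \in A) = (a / 2 < Z w ^+ 2) by apply/idP/idP; rewrite in_setE.
  exact: truncation_bound (sqr_ge0 _).
have PAfin : P A \is a fin_num.
  by rewrite ge0_fin_numE // (le_lt_trans (probability_le1 _ mA)) ?ltey.
have EZ4fin : (\int[P]_w (Z w ^+ 4)%:E)%E \is a fin_num.
  rewrite ge0_fin_numE ?(le_lt_trans EZ4) -?EFinM ?ltey //.
  by apply: integral_ge0 => w _; rewrite lee_fin Z4 sqr_ge0.
move: bound EZ4; rewrite -(fineK PAfin) -(fineK EZ4fin) -!EFinM -!EFinD !lee_fin.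
set p := fine (P A); set b := fine _ => bound EZ4.
have Mb : M^-1 * b <= a / 4.
  apply: le_trans (ler_wpM2l _ EZ4) _; first by rewrite invr_ge0 ltW.
  by rewrite /M le_eqVlt; apply/orP; left; apply/eqP; field; rewrite !gt_eqF.
have : a * 1 <= a * (16 * K * p) by rewrite /M in bound Mb; lra.
rewrite ler_pM2l // => p_ge.
have K16 : 0 < 16 * K by rewrite mulr_gt0.
by rewrite -(ler_pM2l K16) mulfV ?gt_eqF // mulrA.
Qed.

End PaleyZygmund.

Lemma cvg_increments_small (R : realType) (V : normedModType R) (u : nat -> V)
    (r : R) : cvg (u @ \oo) -> 0 < r ->
  exists M, forall k, (M <= k)%N -> forall j, `|u (k + j)%N - u k| < r.
Proof.
move=> /cvgrPdist_lt /(_ (r / 2)) cu r0; have [|M _ uM] := cu; first by rewrite divr_gt0.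
exists M => k Mk j; set l := lim _ in uM.
have uk := uM _ Mk; have ukj := uM (k + j)%N (leq_trans Mk (leq_addr _ _)); rewrite /= in uk ukj.
have -> : u (k + j)%N - u k = (l - u k) - (l - u (k + j)%N).
  by rewrite opprB [RHS]addrC addrA subrK.
by apply: le_lt_trans (ler_normB _ _) _; lra.
Qed.

Lemma nonincreasing_negligible_cvg0 (d : measure_display) (T : measurableType d)
    (R : realType) (mu : {measure set T -> \bar R}) (B : nat -> set T) :
  (mu (B 0%N) < +oo)%E -> (forall m, measurable (B m)) ->
  {homo B : m n / (m <= n)%N >-> (n <= m)%O} ->
  mu.-negligible (\bigcap_m B m) -> (mu \o B) @ \oo --> 0%E.
Proof.
move=> muB0 mB Bdec [N [mN muN capN]].
have mcap : measurable (\bigcap_m B m) by exact: bigcapT_measurable.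
suff <- : mu (\bigcap_m B m) = 0%E by exact: nonincreasing_cvg_mu.
by apply/eqP; rewrite eq_le measure_ge0 andbT -muN le_measure ?inE.
Qed.

Section TailProbability.
Context (d : measure_display) (T : measurableType d) (R : realType)
  (P : probability T R) (H : normedModType R) (X : nat -> T -> H).
Hypothesis X_rv : forall n, H_random_variable (X n).

Lemma measurable_large_increment (c : R) (m j : nat) :
  measurable [set w | c < `|increment X m j w| ^+ 2].
Proof.
rewrite -[X in measurable X]setTI.
have := measurable_funX 2 (increment_norm_measurable X_rv m j) measurableT
  (measurable_itv `]c, +oo[).
by congr measurable; apply/seteqP; split => w /=; rewrite in_itv /= andbT.
Qed.

(* Almost sure convergence of the series forces large increments to become improbable,
   uniformly in the lag: the events "some increment after time m is large" decrease to
   an event on which the partial sums diverge, hence to a negligible event. *)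
Lemma ae_cvg_large_increment_prob (c kap : R) : 0 < c -> 0 < kap ->
  {ae P, forall w, cvg ((fun n => psum X n w) @ \oo)} ->
  exists m0, forall m, (m0 <= m)%N -> forall j,
    (P [set w | (c < `|increment X m j w| ^+ 2)%R] < kap%:E)%E.
Proof.
move=> c0 kap0 [N [mN PN divN]].
pose B m := \bigcup_(k in [set k | (m <= k)%N])
  \bigcup_j [set w | c < `|increment X k j w| ^+ 2].
have mB m : measurable (B m).
  apply: bigcup_measurable => k _; apply: bigcupT_measurable => j.
  exact: measurable_large_increment.
have Bdec : {homo B : m n / (m <= n)%N >-> (n <= m)%O}.
  by move=> m n mn; apply/subsetPset => w [k /= nk Ew]; exists k => //; exact: leq_trans nk.
have Bnegl : P.-negligible (\bigcap_m B m).
  exists N; split => // w Bw; apply: divN => /= cvgw.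
  have sc : 0 < Num.sqrt c by rewrite sqrtr_gt0.
  have [M small] := cvg_increments_small cvgw sc.
  have [k /= Mk [j _]] := Bw M I; move: (small k Mk j) => /=.
  have := sqr_sqrtr (ltW c0); have := normr_ge0 (increment X k j w); nra.
have PB0 : (P (B 0%N) < +oo)%E by rewrite (le_lt_trans (probability_le1 _ (mB 0%N))) ?ltey.
have kap0E : (0 < kap%:E)%E by rewrite lte_fin.
have [m0 _ Pm0] := nonincreasing_negligible_cvg0 PB0 mB Bdec Bnegl (open_ereal_lt' kap0E).
exists m0 => m m0m j; apply: le_lt_trans (Pm0 m m0m).
apply: le_measure; rewrite ?inE //=; first exact: measurable_large_increment.
by move=> w Ew; exists m; [rewrite /= leqnn | exists j].
Qed.

End TailProbability.

Lemma ereal_cvg0_eventually_le (R : realType) (u : nat -> \bar R) :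
  (forall m, (0 <= u m)%E) ->
  (forall e : R, 0 < e -> exists m0, forall m, (m0 <= m)%N -> (u m <= e%:E)%E) ->
  u @ \oo --> 0%E.
Proof.
move=> u0 small.
have ufin e m0 m : (forall m, (m0 <= m)%N -> (u m <= e%:E)%E) ->
    (m0 <= m)%N -> u m \is a fin_num.
  by move=> um0 m0m; rewrite ge0_fin_numE // (le_lt_trans (um0 m m0m)) ?ltey.
apply/fine_cvgP; split.
  by have [m0 um0] := small 1 ltr01; exists m0 => // m /= m0m; exact: ufin um0 m0m.
apply/cvgrPdist_le => e e0; have [m0 um0] := small e e0.
exists m0 => // m /= m0m; rewrite sub0r normrN.
have uf := ufin _ _ _ um0 m0m.
by rewrite ger0_norm ?fine_ge0 // -lee_fin fineK // um0.
Qed.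

Section L2Convergence.
Context (d : measure_display) (T : measurableType d) (R : realType)
  (P : probability T R) (H : normedModType R) (X : nat -> T -> H) (K : R).
Hypothesis X_rv : forall n, H_random_variable (X n).
Hypothesis X_L2 : forall n, finite_second_moment P (X n).
Hypothesis S_ae_cvg : {ae P, forall w, cvg ((fun n => psum X n w) @ \oo)}.
Hypothesis K_gt0 : 0 < K.
Hypothesis increment_moments : forall m j : nat, (1 <= j)%N ->
  (\int[P]_w ((`|increment X m j w| ^+ 4)%:E)
   <= K%:E * ((\int[P]_w ((`|increment X m j w| ^+ 2)%:E))
              * (\int[P]_w ((`|increment X m j w| ^+ 2)%:E))))%E.

(* If E|S_(m+j) - S_m|^2 exceeded e, Paley-Zygmund would give the event
   |S_(m+j) - S_m|^2 > e/2 probability at least 1/(16K), which almost sure convergence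
   rules out for m large. *)
Lemma increment_second_moment_small (e : R) : 0 < e ->
  exists m0, forall m, (m0 <= m)%N -> forall j, (1 <= j)%N ->
    (\int[P]_w (`|increment X m j w| ^+ 2)%:E <= e%:E)%E.
Proof.
move=> e0; have e2 : 0 < e / 2 by rewrite divr_gt0.
have kap0 : 0 < (16 * K)^-1 by rewrite invr_gt0 mulr_gt0.
have [m0 improbable] := ae_cvg_large_increment_prob X_rv e2 kap0 S_ae_cvg.
exists m0 => m m0m j j1; rewrite leNgt; apply/negP => big.
have Ifin : (\int[P]_w (`|increment X m j w| ^+ 2)%:E)%E \is a fin_num.
  rewrite ge0_fin_numE ?increment_second_moment_finite //.
  by apply: integral_ge0 => w _; rewrite lee_fin sqr_ge0.
move: big (@increment_moments m j j1); rewrite -(fineK Ifin) lte_fin.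
set a := fine _ => big moments.
have := paley_zygmund K_gt0 (lt_trans e0 big) (increment_norm_measurable X_rv m j)
  (esym (fineK Ifin)) moments.
apply/negP; rewrite -ltNge; apply: le_lt_trans (improbable m m0m j).
apply: le_measure; rewrite ?inE; try exact: measurable_large_increment.
by move=> w /=; apply: lt_trans; rewrite ltr_pM2r.
Qed.

End L2Convergence.

Theorem theorem3 (d : measure_display) (T : measurableType d) (R : realType)
  (P : probability T R) (H : completeNormedModType R) (ip : H -> H -> R)
  (X : nat -> T -> H) :
  is_inner_product_norm ip ->
  (forall n, H_random_variable (X n)) ->
  (forall n, symmetrical P (X n)) ->
  (forall n, finite_second_moment P (X n)) ->
  {ae P, forall w, cvg ((fun n => psum X n w) @ \oo)} ->
  (exists K : R, 0 < K /\
     forall m j : nat, (1 <= j)%N ->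
       (\int[P]_w ((`|psum X (m + j) w - psum X m w| ^+ 4)%:E)
        <= K%:E * ((\int[P]_w ((`|psum X (m + j) w - psum X m w| ^+ 2)%:E))
                   * (\int[P]_w ((`|psum X (m + j) w - psum X m w| ^+ 2)%:E))))%E) ->
  (fun m : nat => ereal_sup
      [set (\int[P]_w ((`|psum X (m + j) w - psum X m w| ^+ 2)%:E))%E
       | j in [set j : nat | (1 <= j)%N]]) @ \oo --> 0%E.
Proof.
move=> _ X_rv _ X_L2 S_cvg [K [K0 moments]].
apply: ereal_cvg0_eventually_le => [m|e e0].
  apply: le_ereal_sup_tmp; exists (\int[P]_w (`|increment X m 1 w| ^+ 2)%:E)%E; first by exists 1%N.
  by apply: integral_ge0 => w _; rewrite lee_fin sqr_ge0.
have [m0 small] := increment_second_moment_small X_rv X_L2 S_cvg K0 moments e0.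
by exists m0 => m m0m; apply: ge_ereal_sup => _ [j j1 <-]; exact: small.
Qed.
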